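(* Let $\mathbb{A}$ be a Boolean algebra with the positive Grothendieck property, $(\mathbb{B},\mu)$ a metric Boolean algebra, and $\varphi,\varphi_n\in\mathcal{H}(\mathbb{A},\mathbb{B})$ ($n\in\omega$). Let $(A_n)$ be an antichain in $\mathbb{A}$ such that for some $\varepsilon>0$ and every $n\in\omega$ we have $d_\mu(\varphi_n(A_n),\varphi(A_n))\ge\varepsilon$. Then $(\varphi_n)$ does not converge pointwise metric to $\varphi$.
   Context: $\mathbb{A}$ has the positive Grothendieck property if every weak* convergent sequence of non-negative Radon measures on the Stone space $St(\mathbb{A})$ is weakly convergent. A metric Boolean algebra $(\mathbb{B},\mu)$ is a Boolean algebra with a strictly positive finitely additive probability measure $\mu$; $d_\mu(A,B)=\mu(A\triangle B)$. $\mathcal{H}(\mathbb{A},\mathbb{B})$ is the set of homomorphisms $\mathbb{A}\to\mathbb{B}$. An antichain is a sequence of pairwise disjoint elements. $(\varphi_n)$ converges pointwise metric to $\varphi$ if $d_\mu(\varphi_n(A),\varphi(A))\to0$ for every $A\in\mathbb{A}$. *)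

From HB Require Import structures.
From mathcomp Require Import all_boot all_order all_algebra.
From mathcomp Require Import all_classical all_reals all_analysis.
Unset Printing Implicit Defensive.
Import Order.TTheory GRing.Theory Num.Theory numFieldNormedType.Exports.
Local Open Scope classical_set_scope.
Local Open Scope ring_scope.

(* Boolean algebras are MathComp's complemented distributive lattices with
   top and bottom: ctbDistrLatticeType. *)

Definition is_bhom {dA dB : Order.disp_t} {A : ctbDistrLatticeType dA}
    {B : ctbDistrLatticeType dB} (f : A -> B) : Prop :=
  [/\ f Order.bottom = Order.bottom,
      f Order.top = Order.top,
      (forall x y, f (Order.join x y) = Order.join (f x) (f y)),
      (forall x y, f (Order.meet x y) = Order.meet (f x) (f y)) &
      (forall x, f (Order.compl x) = Order.compl (f x))].

Definition metric_measure {R : realType} {d : Order.disp_t}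
    {B : ctbDistrLatticeType d} (mu : B -> R) : Prop :=
  [/\ (forall x, 0 <= mu x),
      (forall x, x != Order.bottom -> 0 < mu x),
      mu Order.top = 1 &
      (forall x y, Order.meet x y = Order.bottom ->
         mu (Order.join x y) = mu x + mu y)].

Definition dmu {R : realType} {d : Order.disp_t} {B : ctbDistrLatticeType d}
    (mu : B -> R) (x y : B) : R :=
  mu (Order.join (Order.diff x y) (Order.diff y x)).

Definition antichain {d : Order.disp_t} {A : ctbDistrLatticeType d}
    (a : nat -> A) : Prop :=
  forall n m, n <> m -> Order.meet (a n) (a m) = Order.bottom.

Definition pointwise_metric_cvg {R : realType} {dA dB : Order.disp_t}
    {A : ctbDistrLatticeType dA} {B : ctbDistrLatticeType dB}
    (mu : B -> R) (phi_ : nat -> A -> B) (phi : A -> B) : Prop :=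
  forall a : A, (fun n => dmu mu (phi_ n a) (phi a)) @ \oo --> (0 : R).

(** To have an (always pointed) carrier type
    for the measurable structure, we realise St(A) as the subset [stone A]
    of the type [set A]; measures on St(A) are measures on [set A] carried
    by [stone A] (i.e. vanishing on its complement). *)
Definition ultrafilter {d : Order.disp_t} {A : ctbDistrLatticeType d}
    (u : set A) : Prop :=
  [/\ ~ u Order.bottom,
      (forall x y, u x -> (x <= y)%O -> u y),
      (forall x y, u x -> u y -> u (Order.meet x y)) &
      (forall x, u x \/ u (Order.compl x))].

Definition stone {d : Order.disp_t} (A : ctbDistrLatticeType d) : set (set A) :=
  [set u | ultrafilter u].

Definition stone_basic {d : Order.disp_t} {A : ctbDistrLatticeType d} (a : A)
  : set (set A) := [set u | stone A u /\ u a].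

Definition stone_open {d : Order.disp_t} {A : ctbDistrLatticeType d}
    (O : set (set A)) : Prop :=
  O `<=` stone A /\
  forall u, O u -> exists a : A, u a /\ stone_basic a `<=` O.

Definition stone_compact {d : Order.disp_t} {A : ctbDistrLatticeType d}
    (C : set (set A)) : Prop :=
  C `<=` stone A /\
  forall F : set (set (set A)),
    (forall O, F O -> stone_open O) ->
    C `<=` \bigcup_(O in F) O ->
    exists (n : nat) (O_ : nat -> set (set A)),
      (forall i, (i < n)%N -> F (O_ i)) /\
      C `<=` \bigcup_(i in [set i | (i < n)%N]) O_ i.

Definition stone_continuous {R : realType} {d : Order.disp_t}
    {A : ctbDistrLatticeType d} (f : set A -> R) : Prop :=
  forall u, stone A u -> forall e : R, 0 < e ->
    exists a : A, u a /\ forall v, stone_basic a v -> `|f v - f u| < e.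

Definition stone_opens {d : Order.disp_t} (A : ctbDistrLatticeType d)
  : set (set (set A)) := [set O | stone_open O].

Definition StoneBorel {d : Order.disp_t} (A : ctbDistrLatticeType d) :=
  g_sigma_algebraType (stone_opens A).

Definition stone_radon {R : realType} {d : Order.disp_t}
    {A : ctbDistrLatticeType d}
    (m : {measure set (StoneBorel A) -> \bar R}) : Prop :=
  [/\ m (~` stone A) = 0%E,
      (m (stone A) < +oo)%E &
      forall B : set (StoneBorel A), measurable B -> B `<=` stone A ->
        m B = ereal_sup [set m C | C in [set C | stone_compact C /\ C `<=` B]]].

Definition weakstar_cvg {R : realType} {d : Order.disp_t}
    {A : ctbDistrLatticeType d}
    (m_ : nat -> {measure set (StoneBorel A) -> \bar R})
    (m : {measure set (StoneBorel A) -> \bar R}) : Prop :=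
  forall f : set A -> R, stone_continuous f ->
    (fun n => (\int[m_ n]_(x in stone A) (f x)%:E)%E) @ \oo -->
      (\int[m]_(x in stone A) (f x)%:E)%E.

(** Restrictions to the cone of non-negative Radon measures of the bounded
    linear functionals on the Banach space M(St(A)) of signed Radon measures
    (total variation norm): additive, positively homogeneous and bounded
    by C * |m|(St(A)).  Every such map extends uniquely to an element of
    M(St(A))^*, and conversely. *)
Definition radon_functional {R : realType} {d : Order.disp_t}
    {A : ctbDistrLatticeType d}
    (Phi : {measure set (StoneBorel A) -> \bar R} -> R) : Prop :=
  [/\ (forall m1 m2 m3, stone_radon m1 -> stone_radon m2 -> stone_radon m3 ->
         (forall B, measurable B -> m3 B = (m1 B + m2 B)%E) ->
         Phi m3 = Phi m1 + Phi m2),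
      (forall (c : R) m1 m2, 0 <= c -> stone_radon m1 -> stone_radon m2 ->
         (forall B, measurable B -> m2 B = (c%:E * m1 B)%E) ->
         Phi m2 = c * Phi m1) &
      exists C : R, forall m, stone_radon m ->
         `|Phi m| <= C * fine (m (stone A))].

Definition weak_cvg {R : realType} {d : Order.disp_t}
    {A : ctbDistrLatticeType d}
    (m_ : nat -> {measure set (StoneBorel A) -> \bar R})
    (m : {measure set (StoneBorel A) -> \bar R}) : Prop :=
  forall Phi, radon_functional Phi ->
    (fun n => Phi (m_ n)) @ \oo --> Phi m.

Definition positive_grothendieck (R : realType) {d : Order.disp_t}
    (A : ctbDistrLatticeType d) : Prop :=
  forall (m_ : nat -> {measure set (StoneBorel A) -> \bar R})
         (m : {measure set (StoneBorel A) -> \bar R}),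
    (forall n, stone_radon (m_ n)) -> stone_radon m ->
    weakstar_cvg m_ m -> weak_cvg m_ m.

From HB Require Import structures.
From mathcomp Require Import all_boot all_order all_algebra.
From mathcomp Require Import all_classical all_reals all_analysis.
From mathcomp Require Import ring lra measurable_realfun.
Import Order.TTheory GRing.Theory Num.Theory numFieldNormedType.Exports.
Import Order.CBDistrLatticeTheory Order.CTBDistrLatticeTheory.
Set Implicit Arguments.
Unset Strict Implicit.
Local Open Scope classical_set_scope.

(* The contents nu = mu \o phi and nu_n = mu \o phi_n on A extend to Radon
   measures on the Stone space St(A): an open W gets the sup of nu over the
   clopens [a] inside W, an arbitrary set the inf over its open supersets, and
   Caratheodory's construction does the rest (compactness of St(A) makes the
   open-set function subadditive).  Continuous functions on St(A) are uniform
   limits of step functions over clopens, so the pointwise convergence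
   nu_n a -> nu a, which follows from |mu x - mu y| <= d_mu(x, y), gives weak*
   convergence of the measures; the positive Grothendieck property upgrades it
   to weak convergence, and testing against m |-> m(U) for the open set
   U = \bigcup_n [A_n] gives nu_n(U) -> nu(U).  Now nu(U) is approximated by a
   finite join J_N = A_0 \/ ... \/ A_(N-1); for n >= N the element A_n is
   disjoint from J_N, nu(A_n) <= nu(U) - nu(J_N) is small, and
   nu_n(A_n) >= eps - nu(A_n) because d_mu(x, y) <= mu x + mu y.  Hence
   nu_n(U) >= nu_n(J_N) + nu_n(A_n) stays above nu(U) + eps/4 for large n. *)

Section Ultrafilters.
Context {d : Order.disp_t} {A : ctbDistrLatticeType d}.
Implicit Types (F G u : set A) (x y : A).
Local Open Scope order_scope.

Definition proper_filter F := [/\ ~ F \bot, F \top,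
  (forall x y, F x -> x <= y -> F y) & (forall x y, F x -> F y -> F (x `&` y))].

Section UltrafilterTheory.
Variables (u : set A) (uU : ultrafilter u).

Lemma ultrafilter0 : ~ u \bot.
Proof. by case: uU. Qed.

Lemma ultrafilter_le x y : u x -> x <= y -> u y.
Proof. by case: uU => _ + _ _; apply. Qed.

Lemma ultrafilter1 : u \top.
Proof. by case: uU => _ _ _ /(_ \top) [|/ultrafilter_le] //; apply; exact: lex1. Qed.

Lemma ultrafilterCN x : u x -> ~ u (~` x).
Proof. by case: uU => u0 _ uI _ ux ucx; apply: u0; rewrite -(meetxC x); exact: uI. Qed.

Lemma ultrafilterC x : ~ u x -> u (~` x).
Proof. by case: uU => _ _ _ /(_ x) []. Qed.

Lemma ultrafilter_meetP x y : u (x `&` y) <-> u x /\ u y.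
Proof.
split; first by move=> uxy; split; apply: ultrafilter_le uxy _; [exact: leIl|exact: leIr].
by case: uU => _ _ uI _ [] /uI; apply.
Qed.

Lemma ultrafilter_joinP x y : u (x `|` y) <-> u x \/ u y.
Proof.
split; last by case=> h; apply: ultrafilter_le h _; [exact: leUl|exact: leUr].
move=> uxy; apply: contrapT => /not_orP [/ultrafilterC ucx /ultrafilterC ucy].
have : u (~` x `&` ~` y) by exact/ultrafilter_meetP.
by rewrite -complU; exact: ultrafilterCN.
Qed.

Lemma ultrafilter_bigjoinP (I : eqType) (r : seq I) (P : pred I) (f : I -> A) :
  u (\join_(i <- r | P i) f i) <-> exists2 i, (i \in r) && P i & u (f i).
Proof.
elim: r => [|i r IH]; first by rewrite big_nil; split=> [/ultrafilter0|[]].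
rewrite big_cons; case: ifPn => Pi; rewrite ?ultrafilter_joinP IH.
  split=> [[ui|[j /andP[jr Pj] uj]]|[j /andP[]]].
  - by exists i; rewrite ?inE ?eqxx.
  - by exists j; rewrite // inE jr orbT.
  by rewrite inE => /orP[/eqP->|jr] Pj uj; [left|right; exists j; rewrite ?jr].
split=> -[j /andP[jr Pj] uj]; exists j => //; first by rewrite inE jr orbT.
by move: jr; rewrite inE => /orP[/eqP ji|->//]; move: Pj; rewrite ji (negPf Pi).
Qed.

End UltrafilterTheory.

Lemma proper_filter_meet F x : proper_filter F ->
  (forall g, F g -> g `&` x != \bot) ->
  proper_filter [set y | exists2 g, F g & g `&` x <= y].
Proof.
case=> F0 F1 Fle FI Fx; split.
- by case=> g Fg; rewrite lex0; apply/negP; exact: Fx.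
- by exists \top => //; exact: lex1.
- by move=> y z [g Fg gy] yz; exists g => //; exact: le_trans yz.
- move=> y z [g Fg gy] [g' Fg' gz]; exists (g `&` g'); first exact: FI.
  rewrite lexI; apply/andP; split; [apply: le_trans gy|apply: le_trans gz];
  by rewrite lexI leIr andbT; apply: leIxl; rewrite ?leIl ?leIr.
Qed.

Lemma maximal_proper_filter_ultra F : proper_filter F ->
  (forall G, F `<` G -> ~ proper_filter G) -> ultrafilter F.
Proof.
move=> FF Fmax; have [F0 F1 Fle FI] := FF.
have Fdisj x : ~ F x -> exists2 g, F g & g `&` x = \bot.
  move=> Fx; apply: contrapT => nodisj.
  have Fx' g : F g -> g `&` x != \bot.
    by move=> Fg; apply/eqP => gx; apply: nodisj; exists g.
  apply: (Fmax _ _ (proper_filter_meet FF Fx')); split.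
    by move=> y Fy; exists y => //; exact: leIl.
  by move=> FG; apply: Fx; apply: FG; exists \top => //; rewrite meet1x.
split => // x; apply: contrapT => /not_orP [/Fdisj [g Fg gx] /Fdisj [g' Fg' gx']].
apply: F0; apply: (Fle (g `&` g')); first exact: FI.
rewrite -[g `&` g']meetx1 -(joinxC x) meetUr leUx; apply/andP; split;
  [rewrite -gx|rewrite -gx']; rewrite lexI leIr andbT; apply: leIxl;
  [exact: leIl|exact: leIr].
Qed.

Lemma proper_filter_chainU F (C : set (set A)) : proper_filter F ->
  (forall X, C X -> proper_filter (F `|` X)%classic) -> total_on C subset ->
  proper_filter (F `|` \bigcup_(X in C) X)%classic.
Proof.
move=> [F0 F1 Fle FI] CF Ctot.
have inU X x : C X -> (F `|` X)%classic x -> (F `|` \bigcup_(X in C) X)%classic x.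
  by move=> CX [Fx|Xx]; [left|right; exists X].
have FXI X x y : C X -> (F `|` X)%classic x -> (F `|` X)%classic y ->
    (F `|` \bigcup_(X in C) X)%classic (x `&` y).
  by move=> CX Xx Xy; apply: (inU X) => //; case: (CF X CX) => _ _ _; apply.
split.
- move=> [F0b|[X CX Xbot]]; first exact: F0 F0b.
  by have [+ _ _ _] := CF X CX; apply; right.
- by left.
- move=> x y [Fx|[X CX Xx]] xy; first by left; exact: Fle xy.
  by apply: (inU X) => //; have [_ _ Xle _] := CF X CX; apply: Xle xy; right.
move=> x y [Fx|[X CX Xx]] [Fy|[Y CY Yy]].
- by left; exact: FI.
- by apply: (FXI Y) => //; [left|right].
- by apply: (FXI X) => //; [right|left].
case: (Ctot _ _ CX CY) => [XY|YX].
  by apply: (FXI Y) => //; right => //; exact: XY.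
by apply: (FXI X) => //; right => //; exact: YX.
Qed.

Lemma proper_filter_ultra F : proper_filter F -> exists2 u, ultrafilter u & F `<=` u.
Proof.
(* Zorn's lemma runs over the X with [F `|` X] proper, so that the empty chain
   is admissible. *)
move=> FF; have [X [FX Xmax]] : exists X, proper_filter (F `|` X)%classic /\
    forall G, X `<` G -> ~ proper_filter (F `|` G)%classic.
  by apply: Zorn_bigcup => C CF Ctot; exact: proper_filter_chainU.
exists (F `|` X)%classic; last exact: subsetUl.
apply: maximal_proper_filter_ultra => // G [FXG GFX] FG.
have FGG : (F `|` G)%classic = G.
  by apply/setUidPr => y Fy; apply: FXG; left.
apply: (Xmax G); last by rewrite FGG.
split; first by move=> y Xy; apply: FXG; right.
by move=> GX; apply: GFX => y Gy; right; exact: GX.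
Qed.

End Ultrafilters.

Section StoneBasic.
Context {d : Order.disp_t} {A : ctbDistrLatticeType d}.
Implicit Types (a b : A) (u : set A).
Local Notation basic := (@stone_basic d A).

Lemma stone_basic_sub a : basic a `<=` stone A.
Proof. by move=> u []. Qed.

Lemma le_stone_basic a b : (a <= b)%O -> basic a `<=` basic b.
Proof. by move=> ab u [su ua]; split => //; exact: (ultrafilter_le su ua ab). Qed.

Lemma stone_basicI a b : basic (a `&` b)%O = basic a `&` basic b.
Proof.
apply/seteqP; split => u; first by case=> su /(ultrafilter_meetP su) [].
by case=> -[su ua] [_ ub]; split => //; exact/(ultrafilter_meetP su).
Qed.

Lemma stone_basicU a b : basic (a `|` b)%O = basic a `|` basic b.
Proof.
apply/seteqP; split => u; first by case=> su /(ultrafilter_joinP su) [];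
  [left|right].
by case=> -[su h]; split => //; apply/(ultrafilter_joinP su); [left|right].
Qed.

Lemma stone_basic_bigjoin (I : eqType) (r : seq I) (P : pred I) (f : I -> A) :
  basic (\join_(i <- r | P i) f i)%O =
  \bigcup_(i in [set i | (i \in r) && P i]) basic (f i).
Proof.
apply/seteqP; split => u; first by case=> su /(ultrafilter_bigjoinP su) [i ? ?];
  exists i.
by case=> i ? [su ?]; split => //; apply/(ultrafilter_bigjoinP su); exists i.
Qed.

Lemma stone_basic0 : basic \bot%O = set0.
Proof. by apply/seteqP; split => u // [su]; exact: (ultrafilter0 su). Qed.

Lemma stone_basic1 : basic \top%O = stone A.
Proof.
by apply/seteqP; split => [u []//|u su]; split => //; exact: (ultrafilter1 su).
Qed.

Lemma stone_basicC a u : stone A u -> basic (~` a)%O u <-> ~ basic a u.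
Proof.
move=> su; split; first by case=> _ uca [_ ua]; exact: (ultrafilterCN su ua uca).
by move=> nua; split => //; apply: ultrafilterC => // ua; exact: nua.
Qed.

Lemma ultrafilter_exists a : a != \bot%O -> exists2 u, stone A u & u a.
Proof.
move=> a0; have [|u uU au] := @proper_filter_ultra _ A [set y | a <= y]%O.
  split => /=; first by rewrite lex0; apply/negP.
  - exact: lex1.
  - by move=> x y ax xy; exact: le_trans xy.
  - by move=> x y ax ay; rewrite lexI ax ay.
by exists u => //; apply: au => /=.
Qed.

Lemma stone_basic_subP a b : basic a `<=` basic b <-> (a <= b)%O.
Proof.
split; last exact: le_stone_basic.
move=> ab; rewrite -diff_eq0; apply: contrapT => /negP /ultrafilter_exists [u su].
rewrite diffE => /(ultrafilter_meetP su) [ua uca].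
by have [_ ub] := ab u (conj su ua); exact: (ultrafilterCN su ub uca).
Qed.

Lemma stone_basic_finite_subcover (P : A -> Prop) a :
  (forall u, stone A u -> u a -> exists2 b, P b & u b) ->
  exists2 bs : seq A, (forall b, b \in bs -> P b) & (a <= \join_(b <- bs) b)%O.
Proof.
(* Otherwise the elements a \ J, J a finite join of P-elements, generate a
   proper filter, and an ultrafilter extending it contains a but no P-element. *)
move=> cover; apply: contrapT => nocover.
pose F := [set y | exists2 bs : seq A, (forall b, b \in bs -> P b) &
  (a `\` \join_(b <- bs) b <= y)%O].
have [|u uU Fu] := @proper_filter_ultra _ A F.
  split.
  - case=> bs Pbs; rewrite lex0 diff_eq0 => aJ; exact: nocover (ex_intro2 _ _ bs Pbs aJ).
  - by exists [::] => //; exact: lex1.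
  - by move=> x y [bs Pbs ax] xy; exists bs => //; exact: le_trans xy.
  move=> x y [bs Pbs ax] [cs Pcs ay]; exists (bs ++ cs).
    by move=> b; rewrite mem_cat => /orP[]; [exact: Pbs|exact: Pcs].
  by rewrite big_cat diffxU leI2.
have ua : u a by apply: Fu; exists [::] => //; rewrite big_nil diffx0.
have [b Pb ub] := cover u uU ua.
have ucb : u (~` b)%O.
  apply: Fu; exists [:: b]; first by move=> c; rewrite inE => /eqP ->.
  by rewrite big_seq1 diffE leIr.
exact: (ultrafilterCN uU ub ucb).
Qed.

End StoneBasic.

Section StoneOpen.
Context {d : Order.disp_t} {A : ctbDistrLatticeType d}.
Implicit Types (a : A) (W : set (set A)).
Local Notation basic := (@stone_basic d A).

Lemma stone_open_basic a : stone_open (basic a).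
Proof. by split=> [|u [su ua]]; [exact: stone_basic_sub|exists a; split]. Qed.

Lemma stone_open_stone : stone_open (stone A).
Proof. by rewrite -stone_basic1; exact: stone_open_basic. Qed.

Lemma stone_open0 : stone_open (set0 : set (set A)).
Proof. by split. Qed.

Lemma stone_openI W1 W2 : stone_open W1 -> stone_open W2 -> stone_open (W1 `&` W2).
Proof.
move=> [W1s W1o] [_ W2o]; split=> [u [/W1s] //|u [W1u W2u]].
have [a1 [ua1 a1W]] := W1o u W1u; have [a2 [ua2 a2W]] := W2o u W2u.
have su := W1s u W1u; exists (a1 `&` a2)%O.
by rewrite stone_basicI; split; [exact/(ultrafilter_meetP su)|exact: setISS].
Qed.

Lemma stone_open_bigcup I (D : set I) (F : I -> set (set A)) :
  (forall i, D i -> stone_open (F i)) -> stone_open (\bigcup_(i in D) F i).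
Proof.
move=> oF; split=> [u [i Di /((oF i Di).1)] //|u [i Di Fu]].
have [a [ua aF]] := (oF i Di).2 u Fu.
by exists a; split => // v /aF Fv; exists i.
Qed.

Definition open_superset (E W : set (set A)) := stone_open W /\ E `&` stone A `<=` W.

Lemma open_superset_stone E : open_superset E (stone A).
Proof. by split; [exact: stone_open_stone|exact: subIsetr]. Qed.

Lemma stone_basic_bigcup_finite a (W : nat -> set (set A)) :
  (forall i, stone_open (W i)) -> basic a `<=` \bigcup_i W i ->
  exists N, basic a `<=` \bigcup_(i in `I_N) W i.
Proof.
move=> oW aW.
have [|bs Pbs abs] := @stone_basic_finite_subcover _ _
    (fun b => exists i, basic b `<=` W i) a.
  move=> u su ua; have [i _ Wu] := aW u (conj su ua).
  by have [b [ub bW]] := (oW i).2 u Wu; exists b => //; exists i.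
suff [N bsN] : exists N, forall b, b \in bs -> basic b `<=` \bigcup_(i in `I_N) W i.
  exists N => u /(le_stone_basic abs); rewrite stone_basic_bigjoin.
  by case=> b /andP[bbs _]; exact: bsN.
elim: bs Pbs {abs} => [|b bs IH] Pbs; first by exists 0%N.
have [i bW] := Pbs b (mem_head _ _).
have [N bsN] := IH (fun c cbs => Pbs c (@mem_behead _ (b :: bs) _ cbs)).
exists (maxn N i.+1) => c; rewrite inE => /orP[/eqP-> u /bW Wu|cbs u].
  by exists i => //=; rewrite leq_max ltnSn orbT.
by case/(bsN c cbs) => j jN Wu; exists j => //=; rewrite leq_max jN.
Qed.

Lemma stone_basic_bigcup_refine a n (W : nat -> set (set A)) :
  (forall i, stone_open (W i)) -> basic a `<=` \bigcup_(i in `I_n) W i ->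
  exists2 c : nat -> A, (forall i, basic (c i) `<=` W i) &
    (a <= \join_(i < n) c i)%O.
Proof.
move=> oW aW.
have [|bs Pbs abs] := @stone_basic_finite_subcover _ _
    (fun b => exists2 i, (i < n)%N & basic b `<=` W i) a.
  move=> u su ua; have [i iN Wu] := aW u (conj su ua).
  by have [b [ub bW]] := (oW i).2 u Wu; exists b => //; exists i.
exists (fun i => \join_(b <- bs | `[< basic b `<=` W i >]) b)%O.
  by move=> i u; rewrite stone_basic_bigjoin => -[b /andP[_ /asboolP bW]]; exact: bW.
apply/stone_basic_subP => u /(le_stone_basic abs).
rewrite !stone_basic_bigjoin => -[b /andP[bbs _] bu].
have [i iN bW] := Pbs b bbs.
exists (Ordinal iN); first by rewrite /= mem_index_enum.
by rewrite stone_basic_bigjoin; exists b => //=; rewrite bbs; exact/asboolP.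
Qed.

End StoneOpen.

Local Open Scope ring_scope.

Section Content.
Context {d : Order.disp_t} (A : ctbDistrLatticeType d) (R : realType).

Record bcontent := BContent {
  bcontent_fun :> A -> R;
  bcontent_ge0 : forall x, 0 <= bcontent_fun x;
  bcontentU : forall x y, (x `&` y)%O = \bot%O ->
    bcontent_fun (x `|` y)%O = bcontent_fun x + bcontent_fun y }.

End Content.

Lemma partial_sum_halves (R : numFieldType) (e : R) n :
  \sum_(i < n) e / 2 ^+ i.+1 = e - e / 2 ^+ n.
Proof.
elim: n => [|n IH]; first by rewrite big_ord0 expr0 divr1 subrr.
have n2 : (2 : R) ^+ n != 0%R by rewrite expf_neq0.
by rewrite big_ord_recr /= IH exprS; field.
Qed.

Section BcontentTheory.
Context {d : Order.disp_t} {A : ctbDistrLatticeType d} {R : realType}.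
Variable nu : bcontent A R.
Implicit Types (x y : A).

Lemma bcontent0 : nu \bot%O = 0.
Proof. by apply: (@addrI _ (nu \bot%O)); rewrite addr0 -bcontentU ?joinx0 ?meetx0. Qed.

Lemma bcontent_split x y : nu x = nu (x `&` y)%O + nu (x `\` y)%O.
Proof. by rewrite -bcontentU ?meetIB ?joinIB. Qed.

Lemma le_bcontent x y : (x <= y)%O -> nu x <= nu y.
Proof. by move=> /meet_idPr yx; rewrite (bcontent_split y x) yx lerDl bcontent_ge0. Qed.

Lemma bcontent_joinU x y : nu (x `|` y)%O <= nu x + nu y.
Proof. by rewrite -diffKU bcontentU ?diffKI // lerD2l; exact/le_bcontent/leBx. Qed.

Lemma bcontent_bigjoin (I : Type) (r : seq I) (P : pred I) (f : I -> A) :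
  nu (\join_(i <- r | P i) f i)%O <= \sum_(i <- r | P i) nu (f i).
Proof.
apply: (big_ind2 (fun x s => nu x <= s)) => //; first by rewrite bcontent0.
by move=> x1 s1 x2 s2 h1 h2; exact: le_trans (bcontent_joinU _ _) (lerD h1 h2).
Qed.

End BcontentTheory.

Section OuterContent.
Context {d : Order.disp_t} {A : ctbDistrLatticeType d} {R : realType}.
Variable nu : bcontent A R.
Implicit Types (a : A) (E W : set (set A)).
Local Notation basic := (@stone_basic d A).

Definition open_content W : R := sup [set nu a | a in [set a | basic a `<=` W]].

Let open_content_has_sup W : has_sup [set nu a | a in [set a | basic a `<=` W]].
Proof.
split; first by exists (nu \bot%O), \bot%O => //=; rewrite stone_basic0; exact: sub0set.
by exists (nu \top%O) => _ [a _ <-]; exact/le_bcontent/lex1.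
Qed.

Lemma open_content_ub W a : basic a `<=` W -> nu a <= open_content W.
Proof. by move=> aW; apply: ub_le_sup; [exact: (open_content_has_sup W).2|exists a]. Qed.

Lemma open_content_le_ub W r :
  (forall a, basic a `<=` W -> nu a <= r) -> open_content W <= r.
Proof.
move=> Wr; apply: ge_sup => [|_ [a aW <-]]; last exact: Wr.
exact: (open_content_has_sup W).1.
Qed.

Lemma open_content_adherent W e : 0 < e ->
  exists2 a, basic a `<=` W & open_content W - e < nu a.
Proof.
move=> e0; have [_ [a aW <-]] := sup_adherent e0 (open_content_has_sup W).
by exists a.
Qed.

Lemma open_content_ge0 W : 0 <= open_content W.
Proof.
by rewrite -(bcontent0 nu); apply: open_content_ub; rewrite stone_basic0; exact: sub0set.
Qed.

Lemma open_content_bigcup_le n (W : nat -> set (set A)) :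
  (forall i, stone_open (W i)) ->
  open_content (\bigcup_(i in `I_n) W i) <= \sum_(i < n) open_content (W i).
Proof.
move=> oW; apply: open_content_le_ub => a aW.
have [c cW ac] := stone_basic_bigcup_refine oW aW.
apply: le_trans (le_bcontent nu ac) _; apply: le_trans (bcontent_bigjoin nu _ _ _) _.
by apply: ler_sum => i _; exact: open_content_ub.
Qed.

Lemma open_content_addI W a : basic a `<=` W ->
  nu a + open_content (W `&` basic (~` a)%O) <= open_content W.
Proof.
move=> aW; rewrite addrC -lerBrDr; apply: open_content_le_ub => b bWa.
have ab : (a `&` b)%O = \bot%O.
  apply/eqP; rewrite meetC disj_leC; apply/stone_basic_subP.
  exact: subset_trans bWa (@subIsetr _ _ _).
rewrite lerBrDr addrC -bcontentU //; apply: open_content_ub.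
rewrite stone_basicU subUset; split => //; exact: subset_trans bWa (@subIsetl _ _ _).
Qed.

(* Only the trace of [E] on St(A) is measured, so the resulting measure is
   carried by St(A) inside the ambient type [set A]. *)
Definition outer_content E : R := inf [set open_content W | W in open_superset E].

Let outer_content_has_inf E : has_inf [set open_content W | W in open_superset E].
Proof.
split; first by exists (open_content (stone A)), (stone A); rewrite //; exact: open_superset_stone.
by exists 0 => _ [W _ <-]; exact: open_content_ge0.
Qed.

Lemma outer_content_lb E W : open_superset E W -> outer_content E <= open_content W.
Proof. by move=> EW; apply: ge_inf; [exact: (outer_content_has_inf E).2|exists W]. Qed.

Lemma outer_content_glb E r :
  (forall W, open_superset E W -> r <= open_content W) -> r <= outer_content E.
Proof.
move=> Er; apply: lb_le_inf => [|_ [W EW <-]]; last exact: Er.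
exact: (outer_content_has_inf E).1.
Qed.

Lemma outer_content_adherent E e : 0 < e ->
  exists2 W, open_superset E W & open_content W < outer_content E + e.
Proof.
move=> e0; have [_ [W EW <-]] := inf_adherent e0 (outer_content_has_inf E).
by exists W.
Qed.

Lemma outer_content_ge0 E : 0 <= outer_content E.
Proof. by apply: outer_content_glb => W _; exact: open_content_ge0. Qed.

Lemma le_outer_content E1 E2 : E1 `<=` E2 -> outer_content E1 <= outer_content E2.
Proof.
move=> E12; apply: outer_content_glb => W [oW E2W]; apply: outer_content_lb.
by split => //; apply: subset_trans E2W; exact: setSI.
Qed.

Lemma outer_content_open W : stone_open W -> outer_content W <= open_content W.
Proof. by move=> oW; apply: outer_content_lb; split => //; exact: subIsetl. Qed.

Lemma outer_content_basic a : outer_content (basic a) = nu a.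
Proof.
apply/le_anti/andP; split.
  apply: le_trans (outer_content_open (stone_open_basic a)) _.
  by apply: open_content_le_ub => b /stone_basic_subP; exact: le_bcontent.
apply: outer_content_glb => W [_ aW]; apply: open_content_ub => u au.
by apply: aW; split => //; exact: stone_basic_sub au.
Qed.

Lemma outer_content_null E : E `&` stone A = set0 -> outer_content E = 0.
Proof.
move=> E0; apply/le_anti; rewrite outer_content_ge0 andbT.
apply: le_trans (outer_content_lb (W := set0) _) _.
  by split; [exact: stone_open0|rewrite E0].
apply: open_content_le_ub => a; rewrite -stone_basic0 => /stone_basic_subP.
by move/(le_bcontent nu); rewrite bcontent0.
Qed.

End OuterContent.

Section StoneMeasure.
Context {d : Order.disp_t} {A : ctbDistrLatticeType d} {R : realType}.
Variable nu : bcontent A R.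
Local Notation basic := (@stone_basic d A).
Local Notation oc := (open_content nu).
Local Notation outer := (outer_content nu).

Lemma outer_content_sigma_subadditive (F : nat -> set (set A)) :
  ((outer (\bigcup_n F n))%:E <= \sum_(n <oo) (outer (F n))%:E)%E.
Proof.
set S := (\sum_(n <oo) _)%E.
have S_ge N : ((\sum_(n < N) outer (F n))%:E <= S)%E.
  rewrite -sumEFin -(big_mkord xpredT (fun n => (outer (F n))%:E)).
  by apply: nneseries_lim_ge => n _ _; rewrite lee_fin outer_content_ge0.
have [Sfin|] := boolP (S \is a fin_num); last first.
  rewrite ge0_fin_numE; last by apply: le_trans (S_ge 0%N); rewrite big_ord0.
  by rewrite -leNgt leye_eq => /eqP ->; rewrite leey.
rewrite -(fineK Sfin) lee_fin; apply/ler_addgt0Pr => e e0.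
have /choice [W FW] n : exists W, open_superset (F n) W /\
    oc W < outer (F n) + e / 2 ^+ n.+1.
  have e2n : 0 < e / 2 ^+ n.+1 by rewrite divr_gt0 ?exprn_gt0.
  by have [W FW ?] := outer_content_adherent nu (F n) e2n; exists W.
have oW n : stone_open (W n) := (FW n).1.1.
apply: le_trans (outer_content_lb nu (W := \bigcup_n W n) _) _.
  split; first by apply: stone_open_bigcup => n _; exact: oW.
  by move=> u [[n _ Fu] su]; exists n => //; apply: (FW n).1.2.
apply: open_content_le_ub => a /(stone_basic_bigcup_finite oW) [N aWN].
apply: le_trans (open_content_ub nu aWN) _.
apply: le_trans (open_content_bigcup_le nu N oW) _.
apply: le_trans (_ : \sum_(n < N) (outer (F n) + e / 2 ^+ n.+1) <= _).
  by apply: ler_sum => n _; exact/ltW/(FW n).2.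
rewrite big_split /= partial_sum_halves lerD //; last first.
  by rewrite gerBl divr_ge0 ?exprn_ge0 ?ltW.
by rewrite -lee_fin (fineK Sfin); exact: S_ge.
Qed.

Definition stone_outer (E : set (set A)) : \bar R := (outer E)%:E.

Lemma stone_outer0 : stone_outer set0 = 0%E.
Proof. by rewrite /stone_outer outer_content_null // set0I. Qed.

Lemma stone_outer_ge0 E : (0 <= stone_outer E)%E.
Proof. by rewrite lee_fin outer_content_ge0. Qed.

Lemma le_stone_outer : {homo stone_outer : E1 E2 / E1 `<=` E2 >-> (E1 <= E2)%E}.
Proof. by move=> E1 E2 E12; rewrite lee_fin le_outer_content. Qed.

HB.instance Definition _ := isOuterMeasure.Build R (set A) stone_outer
  stone_outer0 stone_outer_ge0 le_stone_outer outer_content_sigma_subadditive.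

Lemma stone_open_caratheodory O : stone_open O -> stone_outer.-caratheodory O.
Proof.
move=> oO; apply: le_caratheodory_measurable => X.
change ((outer (X `&` O))%:E + (outer (X `&` ~` O))%:E <= (outer X)%:E)%E.
rewrite -EFinD lee_fin; apply: outer_content_glb => W [oW XW].
apply/ler_addgt0Pr => e e0.
have [a aWO ae] := open_content_adherent nu (W `&` O) e0.
have XO : outer (X `&` O) <= oc (W `&` O).
  apply: outer_content_lb; split; first exact: stone_openI.
  by move=> u [[Xu Ou] su]; split => //; exact: XW.
have XCO : outer (X `&` ~` O) <= oc (W `&` basic (~` a)%O).
  apply: outer_content_lb; split; first exact/stone_openI/stone_open_basic.
  move=> u [[Xu nOu] su]; split; first exact: XW.
  by apply/(stone_basicC a su) => /aWO [].
have := open_content_addI nu (subset_trans aWO (@subIsetl _ _ _)).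
lra.
Qed.

Lemma stone_measurable_caratheodory (E : set (StoneBorel A)) :
  measurable E -> stone_outer.-caratheodory E.
Proof.
move=> mE; apply: (smallest_sub _ _ mE); last by move=> O; exact: stone_open_caratheodory.
split.
- exact: caratheodory_measurable_set0.
- by move=> B cB; rewrite setTD; exact: caratheodory_measurable_setC.
- by move=> B cB; exact: caratheodory_measurable_bigcup.
Qed.

Definition stone_measure (E : set (StoneBorel A)) : \bar R := stone_outer E.

Lemma stone_measure_semi_sigma_additive : semi_sigma_additive stone_measure.
Proof.
move=> F mF tF mU; exact: (caratheodory_measure_sigma_additive
  (fun i => stone_measurable_caratheodory (mF i)) tF (stone_measurable_caratheodory mU)).
Qed.

HB.instance Definition _ := isMeasure.Build _ (StoneBorel A) R stone_measure
  stone_outer0 stone_outer_ge0 stone_measure_semi_sigma_additive.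

End StoneMeasure.

Section StoneRadon.
Context {d : Order.disp_t} {A : ctbDistrLatticeType d}.
Local Notation basic := (@stone_basic d A).

Lemma stone_compact_closed (W : set (set A)) : stone_open W ->
  stone_compact (stone A `&` ~` W).
Proof.
move=> [Ws oW]; split; first exact: subIsetl.
move=> F oF cover.
have [|bs Pbs abs] := @stone_basic_finite_subcover _ _
    (fun b => basic b `<=` W \/ exists2 V, F V & basic b `<=` V) \top%O.
  move=> u su _; have [Wu|nWu] := pselect (W u).
    by have [b [ub bW]] := oW u Wu; exists b => //; left.
  have [V FV Vu] := cover u (conj su nWu).
  by have [b [ub bV]] := (oF V FV).2 u Vu; exists b => //; right; exists V.
pose cs := [seq b <- bs | ~~ `[< basic b `<=` W >]].
have csF b : b \in cs -> exists2 V, F V & basic b `<=` V.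
  by rewrite mem_filter => /andP[/asboolP nbW /Pbs []].
pose g b := if pselect (exists2 V, F V & basic b `<=` V) is left h
  then projT1 (cid2 h) else set0.
have gF b : b \in cs -> F (g b) /\ basic b `<=` g b.
  move=> /csF h; rewrite /g; case: pselect => // h'.
  by case: (cid2 h') => V FV bV.
exists (size cs), (fun i => g (nth \bot%O cs i)); split.
  by move=> i ics; have [] := gF _ (mem_nth \bot%O ics).
move=> u [su nWu].
have /(ultrafilter_bigjoinP su) [b /andP[bbs _] ub] :=
  ultrafilter_le su (ultrafilter1 su) abs.
have bcs : b \in cs.
  by rewrite mem_filter bbs andbT; apply/negP => /asboolP bW; apply: nWu; exact: bW.
exists (index b cs); first by rewrite /= index_mem.
by rewrite nth_index //; apply: (gF _ bcs).2.
Qed.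

Lemma stone_open_measurable (W : set (StoneBorel A)) : stone_open W -> measurable W.
Proof. exact: sub_gen_smallest. Qed.

Lemma stone_measurable : measurable (stone A : set (StoneBorel A)).
Proof. exact: (stone_open_measurable stone_open_stone). Qed.

Lemma stone_basic_measurable a : measurable (basic a : set (StoneBorel A)).
Proof. exact: (stone_open_measurable (stone_open_basic a)). Qed.

Context {R : realType} (nu : bcontent A R).
Local Notation outer := (outer_content nu).

Lemma stone_measureE E : stone_measure nu E = (outer E)%:E.
Proof. by []. Qed.

Lemma stone_measure_basic a : stone_measure nu (basic a) = (nu a)%:E.
Proof. by rewrite stone_measureE outer_content_basic. Qed.

Lemma outer_contentU (E1 E2 : set (StoneBorel A)) : measurable E1 -> measurable E2 ->
  E1 `&` E2 = set0 -> outer (E1 `|` E2) = outer E1 + outer E2.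
Proof.
by move=> mE1 mE2 E12; apply: EFin_inj; rewrite EFinD -!stone_measureE measureU.
Qed.

Lemma stone_measure_radon : stone_radon (stone_measure nu).
Proof.
split; first by rewrite /= stone_measureE outer_content_null // setICl.
  by rewrite /= stone_measureE ltry.
move=> B mB Bs; apply/le_anti/andP; split; last first.
  apply: ge_ereal_sup => _ [C [_ CB] <-].
  by rewrite /= !stone_measureE lee_fin le_outer_content.
(* Approximate St(A) \ B from outside by an open W: St(A) \ W is a compact
   subset of B of almost the same measure. *)
apply/lee_addgt0Pr => e e0.
have [W [oW BcW] We] := outer_content_adherent nu (stone A `\` B) e0.
pose C := stone A `&` ~` W.
have CB : C `<=` B.
  by move=> u [su nWu]; apply: contrapT => nBu; apply: nWu; apply: BcW.
have mBc : measurable (stone A `\` B : set (StoneBorel A)).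
  exact: measurableD stone_measurable mB.
have mW := stone_open_measurable oW.
have eB : outer (stone A) = outer B + outer (stone A `\` B).
  by rewrite -outer_contentU ?setDUK // setDE setICA setICr setI0.
have eW : outer (stone A) = outer C + outer W.
  have mC : measurable (C : set (StoneBorel A)).
    exact: measurableI stone_measurable (measurableC mW).
  rewrite -outer_contentU //; last by rewrite /C -setIA setICl setI0.
  congr outer; apply/seteqP; split=> [u su|u [[]//|/oW.1//]].
  by have [Wu|nWu] := pselect (W u); [right|left].
have oWW := outer_content_open nu oW.
apply: le_trans (_ : (outer C)%:E + e%:E <= _)%E.
  by rewrite /= stone_measureE -EFinD lee_fin; lra.
rewrite leeD2r //; apply: ereal_sup_ubound; exists C => //.
by split => //; exact: stone_compact_closed.
Qed.

End StoneRadon.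

Section StoneIntegral.
Context {d : Order.disp_t} {A : ctbDistrLatticeType d} {R : realType}.
Local Notation basic := (@stone_basic d A).
Local Notation St := (stone A : set (StoneBorel A)).
Implicit Types (f g : set A -> R) (s : seq (A * R)).

Lemma stone_continuous_measurable f : stone_continuous f ->
  measurable_fun St (f : StoneBorel A -> R).
Proof.
move=> cf; apply: (measurability _ (RGenOpens.measurableE R)).
move=> _ [_ [x [y ->]] <-]; apply: sub_gen_smallest; split; first exact: subIsetl.
move=> u [su /=]; rewrite in_itv /= => /andP[xf fy].
have [|a [ua af]] := cf u su (Num.min (f u - x) (y - f u)).
  by rewrite lt_min !subr_gt0 xf fy.
exists a; split => // v av; split; first by case: av.
have := af v av; rewrite lt_min !ltr_norml => /andP[/andP[? ?] /andP[? ?]].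
by rewrite /= in_itv /=; apply/andP; split; lra.
Qed.

Definition stone_step s (v : set A) : R := \sum_(x <- s) x.2 * \1_(basic x.1) v.

Lemma stone_step_measurable s : measurable_fun St (stone_step s : StoneBorel A -> R).
Proof.
apply: measurable_sum => x; apply: measurable_funM; first exact: measurable_cst.
by apply: measurable_indic; exact: stone_basic_measurable.
Qed.

Lemma stone_step_bound s v : `|stone_step s v| <= \sum_(x <- s) `|x.2|.
Proof.
apply: le_trans (ler_norm_sum _ _ _) _; apply: ler_sum => x _.
by rewrite normrM ler_piMr // indicE; case: (_ \in _); rewrite ?normr1 ?normr0.
Qed.

(* Prepending a block [b] and removing [b] from the later blocks keeps the
   blocks of a step function disjoint. *)
Lemma stone_step_cons_in s b r v : stone A v -> v b ->
  stone_step ((b, r) :: [seq ((x.1 `\` b)%O, x.2) | x <- s]) v = r.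
Proof.
move=> sv vb; rewrite /stone_step big_cons big_map /= big1 ?addr0 => [|x _].
  by rewrite indicE mem_set ?mulr1.
rewrite indicE memNset ?mulr0 // => -[_]; rewrite diffE => /(ultrafilter_meetP sv) [_].
exact: (ultrafilterCN sv vb).
Qed.

Lemma stone_step_cons_out s b r v : stone A v -> ~ v b ->
  stone_step ((b, r) :: [seq ((x.1 `\` b)%O, x.2) | x <- s]) v = stone_step s v.
Proof.
move=> sv vb; rewrite /stone_step big_cons big_map /= indicE memNset ?mulr0 ?add0r;
  last by case.
apply: eq_bigr => x _; congr (_ * _); rewrite !indicE.
have xbv : basic (x.1 `\` b)%O v <-> basic x.1 v.
  rewrite diffE stone_basicI; split=> [[]//|xv]; split=> //.
  by apply/(stone_basicC b sv) => -[].
by have [xv|xv] := pselect (basic x.1 v); [rewrite !mem_set ?xbv|rewrite !memNset ?xbv].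
Qed.

Lemma stone_step_approx_cover f e (bs : seq A) :
  (forall b, b \in bs -> forall v w, basic b v -> basic b w -> `|f v - f w| <= e) ->
  exists s, forall v, stone A v ->
    (v (\join_(b <- bs) b)%O -> `|f v - stone_step s v| <= e) /\
    (~ v (\join_(b <- bs) b)%O -> stone_step s v = 0).
Proof.
elim: bs => [|b bs IH] osc.
  by exists [::] => v sv; rewrite /stone_step !big_nil; split=> // /(ultrafilter0 sv).
have [s sP] := IH (fun c cbs => osc c (@mem_behead _ (b :: bs) _ cbs)).
pose r := if pselect (exists w, basic b w) is left h then f (projT1 (cid h)) else 0.
have rP v : basic b v -> `|f v - r| <= e.
  move=> bv; rewrite /r; case: pselect => [h|]; last by case; exists v.
  by case: (cid h) => w bw /=; exact: osc (mem_head _ _) v w bv bw.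
exists ((b, r) :: [seq ((x.1 `\` b)%O, x.2) | x <- s]) => v sv.
rewrite big_cons (ultrafilter_joinP sv); have [vb|vb] := pselect (v b).
  by rewrite stone_step_cons_in //; split=> [_|[]]; [exact: rP|left].
rewrite stone_step_cons_out //; have [sP1 sP2] := sP v sv.
by split=> [[//|/sP1]|nvJ] //; apply: sP2 => vJ; apply: nvJ; right.
Qed.

Lemma stone_step_approx f e : stone_continuous f -> 0 < e ->
  exists s, forall v, stone A v -> `|f v - stone_step s v| <= e.
Proof.
move=> cf e0; have [|bs osc topJ] := @stone_basic_finite_subcover _ _
    (fun b => forall v w, basic b v -> basic b w -> `|f v - f w| <= e) \top%O.
  move=> u su _; have [a [ua af]] := cf u su (e / 2) (divr_gt0 e0 (ltr0Sn R 1)).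
  exists a => // v w av aw; have := af v av; have := af w aw.
  rewrite distrC; have := ler_distD (f u) (f v) (f w); lra.
have [s sP] := stone_step_approx_cover osc; exists s => v sv.
exact: (sP v sv).1 (ultrafilter_le sv (ultrafilter1 sv) topJ).
Qed.

Variable nu : bcontent A R.
Local Notation mu := (stone_measure nu).

Lemma stone_integrable_bounded g M : measurable_fun St (g : StoneBorel A -> R) ->
  (forall v, St v -> `|g v| <= M) -> mu.-integrable St (EFin \o g).
Proof.
move=> mg gM; apply: measurable_bounded_integrable => //.
- exact: stone_measurable.
- by rewrite /= stone_measureE ltry.
exists M; split; first exact: num_real.
by move=> N MN v Sv; exact: le_trans (gM v Sv) (ltW MN).
Qed.

Lemma stone_step_integrable s : mu.-integrable St (EFin \o stone_step s).
Proof.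
exact: stone_integrable_bounded (stone_step_measurable s) (fun v _ => stone_step_bound s v).
Qed.

Lemma stone_measure_stone : mu St = (nu \top%O)%:E.
Proof. by rewrite -stone_basic1 stone_measure_basic. Qed.

Lemma stone_integral_step s :
  (\int[mu]_(v in St) (stone_step s v)%:E = (\sum_(x <- s) x.2 * nu x.1)%:E)%E.
Proof.
have intI a : mu.-integrable St (EFin \o \1_(basic a)).
  apply: (stone_integrable_bounded (M := 1)).
    by apply: measurable_indic; exact: stone_basic_measurable.
  by move=> v _; rewrite indicE; case: (_ \in _); rewrite ?normr1 ?normr0.
under eq_integral do rewrite /stone_step -sumEFin.
under eq_integral do under eq_bigr do rewrite EFinM.
rewrite integral_sum; last 2 first.
- exact: stone_measurable.
- by move=> x; apply: integrableZl; [exact: stone_measurable|exact: intI].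
rewrite -sumEFin; apply: eq_bigr => x _.
rewrite (integralZl stone_measurable (intI x.1)) integral_indic ?setIidl.
- by rewrite /= stone_measure_basic -EFinM.
- exact: stone_basic_sub.
- exact: stone_measurable.
- exact: stone_basic_measurable.
Qed.

Lemma stone_continuous_integrable f : stone_continuous f ->
  mu.-integrable St (EFin \o f).
Proof.
move=> cf; have [s sP] := stone_step_approx cf ltr01.
apply: (stone_integrable_bounded (M := \sum_(x <- s) `|x.2| + 1)).
  exact: stone_continuous_measurable.
move=> v sv; rewrite -[f v](subrK (stone_step s v)).
by apply: le_trans (ler_normD _ _) _; rewrite addrC lerD ?stone_step_bound ?sP.
Qed.

Lemma stone_Rintegral_step s :
  \int[mu]_(v in St) stone_step s v = \sum_(x <- s) x.2 * nu x.1.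
Proof. by rewrite /Rintegral stone_integral_step. Qed.

Lemma stone_Rintegral_step_approx f e s : stone_continuous f ->
  (forall v, St v -> `|f v - stone_step s v| <= e) ->
  `|\int[mu]_(v in St) f v - \sum_(x <- s) x.2 * nu x.1| <= e * nu \top%O.
Proof.
move=> cf fs; have mS := @stone_measurable d A.
have intfs : mu.-integrable St (EFin \o (fun v => f v - stone_step s v)).
  apply: (stone_integrable_bounded (M := e)) fs.
  exact: measurable_funB (stone_continuous_measurable cf) (stone_step_measurable s).
have inte : mu.-integrable St (EFin \o cst e).
  by apply: (stone_integrable_bounded (M := `|e|)) => //; exact: measurable_cst.
rewrite -stone_Rintegral_step -RintegralB //; last first.
- exact: stone_step_integrable.
- exact: stone_continuous_integrable.
apply: le_trans (le_normr_Rintegral mS intfs) _.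
rewrite (_ : e * _ = \int[mu]_(v in St) e); last first.
  by rewrite Rintegral_cst // -[nu _]/(fine (nu \top%O)%:E) -stone_measure_stone.
by apply: le_Rintegral => //; exact: integrable_norm.
Qed.

End StoneIntegral.

Section StoneWeakStar.
Context {d : Order.disp_t} {A : ctbDistrLatticeType d} {R : realType}.
Variables (c_ : nat -> bcontent A R) (c : bcontent A R).
Hypothesis c_cvg : forall a, c_ n a @[n --> \oo] --> c a.
Local Notation St := (stone A : set (StoneBorel A)).

Lemma cvg_bcontent_sum (s : seq (A * R)) :
  \sum_(x <- s) x.2 * c_ n x.1 @[n --> \oo] --> \sum_(x <- s) x.2 * c x.1.
Proof.
elim: s => [|x s IH].
  by rewrite big_nil; under eq_fun do rewrite big_nil; exact: cvg_cst.
rewrite big_cons; under eq_fun do rewrite big_cons.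
by apply: cvgD => //; apply: cvgMl_tmp; exact: c_cvg.
Qed.

Lemma stone_Rintegral_cvg f : stone_continuous f ->
  \int[stone_measure (c_ n)]_(v in St) f v @[n --> \oo] -->
  \int[stone_measure c]_(v in St) f v.
Proof.
move=> cf; apply/cvgrPdist_le => eps eps0.
have ct0 : 0 < 2 * c \top%O + 2 by have := bcontent_ge0 c \top%O; lra.
pose e := eps / (2 * c \top%O + 2).
have e0 : 0 < e by exact: divr_gt0.
have epsE : eps = 2 * (e * c \top%O) + 2 * e by rewrite /e; field; exact: lt0r_neq0.
have [s sP] := stone_step_approx cf e0.
(* |I - I_n| <= |I - S| + |S - S_n| + |S_n - I_n| <= e c(top) + e + e (c(top) + 1) *)
have Ic := stone_Rintegral_step_approx c cf sP.
move/cvgrPdist_le : (cvg_bcontent_sum (s := s)) => /(_ e e0) Scvg.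
move/cvgrPdist_le : (c_cvg (a := \top%O)) => /(_ 1 ltr01) topn.
apply: filterS2 Scvg topn => n SSn topn.
have Icn := stone_Rintegral_step_approx (c_ n) cf sP.
have ctop : e * c_ n \top%O <= e * c \top%O + e.
  rewrite -[e in _ + e]mulr1 -mulrDr; apply: ler_wpM2l; first exact: ltW.
  by move: topn; rewrite ler_distlC => /andP[].
move: Ic Icn SSn ctop.
set I := \int[_]_(v in _) _; set In := \int[_]_(v in _) _.
set S := \sum_(x <- s) _; set Sn := \sum_(x <- s) _.
move=> Ic Icn SSn ctop.
have := ler_distD S I In; have := ler_distD Sn S In.
rewrite [`|Sn - In|]distrC; lra.
Qed.

End StoneWeakStar.

Lemma stone_measure_weakstar_cvg {d : Order.disp_t} {A : ctbDistrLatticeType d}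
    {R : realType} (c_ : nat -> bcontent A R) (c : bcontent A R) :
  (forall a, c_ n a @[n --> \oo] --> c a) ->
  weakstar_cvg (fun n => stone_measure (c_ n)) (stone_measure c).
Proof.
move=> c_cvg f cf.
have fin (nu : bcontent A R) :
    (\int[stone_measure nu]_(v in stone A) (f v)%:E)%E \is a fin_num.
  exact: (integrable_fin_num stone_measurable (stone_continuous_integrable nu cf)).
rewrite -(fineK (fin c)); apply: cvg_EFin; first by apply: nearW => n; exact: fin.
exact: (stone_Rintegral_cvg c_cvg cf).
Qed.

Section HomomorphismContent.
Context {dA dB : Order.disp_t} {A : ctbDistrLatticeType dA}
  {B : ctbDistrLatticeType dB} {R : realType}.

Definition metric_bcontent (mu : B -> R) (hmu : metric_measure mu) : bcontent B R :=
  BContent (let: And4 mu_ge0 _ _ _ := hmu in mu_ge0) (let: And4 _ _ _ muU := hmu in muU).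

Lemma dmuE (nu : bcontent B R) x y : dmu nu x y = nu (x `\` y)%O + nu (y `\` x)%O.
Proof. by rewrite /dmu bcontentU // meetBx diffKI diff0x. Qed.

Lemma dmu_le_add (nu : bcontent B R) x y : dmu nu x y <= nu x + nu y.
Proof. by rewrite dmuE lerD // le_bcontent ?leBx. Qed.

Lemma dist_le_dmu (nu : bcontent B R) x y : `|nu x - nu y| <= dmu nu x y.
Proof.
rewrite dmuE {1}(bcontent_split nu x y) {1}(bcontent_split nu y x) meetC.
have := bcontent_ge0 nu (x `\` y)%O; have := bcontent_ge0 nu (y `\` x)%O.
by rewrite ler_norml; move=> *; apply/andP; split; lra.
Qed.

Lemma bhom_bcontentU (nu : bcontent B R) (psi : A -> B) : is_bhom psi ->
  forall x y, (x `&` y)%O = \bot%O ->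
  nu (psi (x `|` y)%O) = nu (psi x) + nu (psi y).
Proof. by case=> psi0 _ psiU psiI _ x y xy; rewrite psiU bcontentU // -psiI xy. Qed.

Definition bhom_bcontent (nu : bcontent B R) (psi : A -> B) (hpsi : is_bhom psi) :=
  BContent (fun x => bcontent_ge0 nu (psi x)) (bhom_bcontentU nu hpsi).

Lemma pointwise_metric_cvg_bcontent (nu : bcontent B R) (phi_ : nat -> A -> B) phi :
  pointwise_metric_cvg nu phi_ phi -> forall a, nu (phi_ n a) @[n --> \oo] --> nu (phi a).
Proof.
move=> phi_cvg a; apply/cvgrPdist_le => e e0.
move/cvgrPdist_le: (phi_cvg a) => /(_ e e0); apply: filterS => n.
rewrite sub0r normrN ger0_norm; last by rewrite dmuE addr_ge0 ?bcontent_ge0.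
by rewrite distrC; apply: le_trans (dist_le_dmu _ _ _).
Qed.

End HomomorphismContent.

Section Antichain.
Context {d : Order.disp_t} {A : ctbDistrLatticeType d} {R : realType}.
Variables (a_ : nat -> A) (a_anti : antichain a_).
Local Notation basic := (@stone_basic d A).

Definition antichain_union : set (StoneBorel A) := \bigcup_n basic (a_ n).

Definition antichain_join N : A := (\join_(i < N) a_ i)%O.

Lemma stone_open_antichain_union : stone_open antichain_union.
Proof. by apply: stone_open_bigcup => n _; exact: stone_open_basic. Qed.

Lemma antichain_join_disjoint N n : (N <= n)%N ->
  (antichain_join N `&` a_ n)%O = \bot%O.
Proof.
move=> Nn; rewrite meetC; apply: joins_disjoint => i _; apply: a_anti => ni.
by have := ltn_ord i; rewrite -ni ltnNge Nn.
Qed.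

Lemma bcontent_antichain_join_le (nu : bcontent A R) N n : (N <= n)%N ->
  nu (antichain_join N) + nu (a_ n) <= outer_content nu antichain_union.
Proof.
move=> Nn; rewrite -bcontentU ?antichain_join_disjoint // -outer_content_basic.
apply: le_outer_content; rewrite stone_basicU stone_basic_bigjoin subUset.
by split=> [u [i _ ui]|u un]; [exists i|exists n].
Qed.

Lemma antichain_join_approx (nu : bcontent A R) e : 0 < e ->
  exists N, outer_content nu antichain_union - e <= nu (antichain_join N).
Proof.
move=> e0; have [a aU ae] := open_content_adherent nu antichain_union e0.
have [N aN] := stone_basic_bigcup_finite (fun n => stone_open_basic (a_ n)) aU.
exists N; have : (a <= antichain_join N)%O.
  apply/stone_basic_subP; apply: subset_trans aN _ => u [i /= iN ui].
  by rewrite stone_basic_bigjoin; exists (Ordinal iN); rewrite /= ?mem_index_enum.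
move/(le_bcontent nu); have := outer_content_open nu stone_open_antichain_union.
lra.
Qed.

Lemma antichain_bcontent_gap (c_ : nat -> bcontent A R) (c : bcontent A R) eps :
  0 < eps -> (forall a, c_ n a @[n --> \oo] --> c a) ->
  outer_content (c_ n) antichain_union @[n --> \oo] -->
    outer_content c antichain_union ->
  ~ (forall n, eps <= c_ n (a_ n) + c (a_ n)).
Proof.
move=> eps0 c_cvg U_cvg gap.
have e4 : 0 < eps / 4 by rewrite divr_gt0.
have e8 : 0 < eps / 8 by rewrite divr_gt0.
have [N LJ] := antichain_join_approx c e4.
move/cvgrPdist_le : (c_cvg (antichain_join N)) => /(_ _ e4) Jcvg.
move/cvgrPdist_le : U_cvg => /(_ _ e8) Ucvg.
have [n [Nn [Jn Un]]] := filter_ex (@filterS3 _ _ _ _ _ _ _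
  (fun n a b c => conj a (conj b c)) (nbhs_infty_ge N) Jcvg Ucvg).
have := bcontent_antichain_join_le c Nn; have := bcontent_antichain_join_le (c_ n) Nn.
have := gap n; move: Jn Un LJ; rewrite !ler_distlC => /andP[? ?] /andP[? ?].
lra.
Qed.

End Antichain.

Lemma radon_functional_eval {d : Order.disp_t} {A : ctbDistrLatticeType d}
    {R : realType} (U : set (StoneBorel A)) : measurable U -> U `<=` stone A ->
  radon_functional (fun m : {measure set (StoneBorel A) -> \bar R} => fine (m U)).
Proof.
move=> mU Us; pose St := stone A : set (StoneBorel A).
have mUS (m : {measure set (StoneBorel A) -> \bar R}) : (m U <= m St)%E.
  by apply: le_measure => //; rewrite inE; [exact: mU|exact: stone_measurable].
have finS (m : {measure set (StoneBorel A) -> \bar R}) :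
    stone_radon m -> m St \is a fin_num.
  by case=> _ mfin _; rewrite ge0_fin_numE ?measure_ge0.
have finU (m : {measure set (StoneBorel A) -> \bar R}) :
    stone_radon m -> m U \is a fin_num.
  by move=> rm; rewrite ge0_fin_numE ?measure_ge0 // (le_lt_trans (mUS m)) -?ge0_fin_numE ?finS.
split.
- by move=> m1 m2 m3 r1 r2 r3 m3E; rewrite m3E // fineD ?finU.
- by move=> k m1 m2 k0 r1 r2 m2E; rewrite m2E // fineM ?finU.
exists 1 => m rm; rewrite mul1r ger0_norm ?fine_ge0 ?measure_ge0 //.
exact: fine_le (finU m rm) (finS m rm) (mUS m).
Qed.

Theorem proposition5p7 (R : realType) (dA dB : Order.disp_t)
    (A : ctbDistrLatticeType dA) (B : ctbDistrLatticeType dB)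
    (mu : B -> R) (phi : A -> B) (phi_ : nat -> A -> B)
    (An : nat -> A) (eps : R) :
  positive_grothendieck R A ->
  metric_measure mu ->
  is_bhom phi ->
  (forall n, is_bhom (phi_ n)) ->
  antichain An ->
  0 < eps ->
  (forall n, eps <= dmu mu (phi_ n (An n)) (phi (An n))) ->
  ~ pointwise_metric_cvg mu phi_ phi.
Proof.
move=> grothendieck hmu hphi hphi_ anti eps0 gap phi_cvg.
pose nu := metric_bcontent hmu.
pose c := bhom_bcontent nu hphi; pose c_ n := bhom_bcontent nu (hphi_ n).
have c_cvg : forall a, c_ n a @[n --> \oo] --> c a.
  exact: (pointwise_metric_cvg_bcontent (nu := nu) phi_cvg).
have oU := stone_open_antichain_union An.
have U_cvg := grothendieck _ _ (fun n => stone_measure_radon (c_ n))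
  (stone_measure_radon c) (stone_measure_weakstar_cvg c_cvg) _
  (radon_functional_eval (stone_open_measurable oU) oU.1).
apply: (antichain_bcontent_gap anti eps0 c_cvg U_cvg) => n.
exact: le_trans (gap n) (dmu_le_add nu _ _).
Qed.
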